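(* Let $\mathcal A$ (analysis units, $|\mathcal A|=n_a$) and $\mathcal R$ (randomization units, $|\mathcal R|=n_r$) be finite sets, let $\mathbf T=(T_r)_{r\in\mathcal R}$ be the random treatment vector, and let $E_{ar}:\{0,1\}^{n_r}\to\{0,1\}$, $e_{ar}=E_{ar}(\mathbf T)$, $w_{ar}$, $\alpha_a,\beta_a$, $x_a$, $y_a$, $\mu$, $\mathcal W_a(\mathbf 1)$, $z^u_a$, $\hat\beta^u_a$, $\widehat{\mathcal W_a(\mathbf 1)}^c$ be as in the context. Suppose $G\subset\mathcal A\times\mathcal R$ is a known anchor subgraph. Assume: (a) edges are $r$-driven; (b) the treatment assignments $T_r$, $r\in\mathcal R$, are independent Bernoulli random variables with success probability $p\in(0,1)$; (c) $\{(a,r)\mid u_{ar}\neq 0\}\subset G$; (d) $c_{ar}=\mathbb I((a,r)\in G)$ for all $(a,r)$; (e) $w_{ar}\neq 0$ for all $(a,r)\in G$; and (f) $|\{r\mid u_{ar}\neq 0\}|>0$ for all $a\in\mathcal A$. Then $$\hat\mu^{u,c}=\frac1{n_a}\sum_{a\in\mathcal A}\hat\beta^u_a\cdot\widehat{\mathcal W_a(\mathbf 1)}^c$$ is an unbiased estimator of the total treatment effect $\mu$, i.e.\ $\mathbb E[\hat\mu^{u,c}]=\mu$.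
   Context: Setting (endogenous bipartite interference graph). $\mathcal A$ is a set of $n_a$ analysis units, $\mathcal R$ a set of $n_r$ randomization units. A random treatment vector $\mathbf T=(T_r)_{r\in\mathcal R}\in\{0,1\}^{n_r}$ is assigned; all randomness comes from $\mathbf T$. For each $(a,r)\in\mathcal A\times\mathcal R$ there is an (unknown) edge potential outcome function $E_{ar}:\{0,1\}^{n_r}\to\{0,1\}$; its realization $e_{ar}=E_{ar}(\mathbf T)$ is observed. Edges are called $r$-driven if for every $(a,r)$, $E_{ar}(\mathbf T)$ depends on $\mathbf T$ only through $T_r$; then $e_{ar}(1)$ denotes the value of $E_{ar}$ when $T_r=1$ (so $e_{ar}(1)=E_{ar}(\mathbf 1)$). An anchor subgraph is a set $G\subset\mathcal A\times\mathcal R$ such that $E_{ar}(\mathbf T)=1$ for every $\mathbf T\in\{0,1\}^{n_r}$ and every $(a,r)\in G$. Outcome model: given known real weights $w_{ar}$, the potential outcome of analysis unit $a$ is $Y_a(\mathbf T)=\alpha_a+\beta_a x_a$ where $x_a=\sum_r T_r E_{ar}(\mathbf T)w_{ar}$ and $\alpha_a,\beta_a$ are unknown fixed constants; the realized outcome is $y_a=Y_a(\mathbf T)$. The total treatment effect (TTE) is $\mu=\frac1{n_a}\sum_a[Y_a(\mathbf 1)-Y_a(\mathbf 0)]=\frac1{n_a}\sum_a\mathcal W_a(\mathbf 1)\beta_a$, where $\mathcal W_a(\mathbf 1)=\sum_r w_{ar}E_{ar}(\mathbf 1)$ and $\mathbf 1,\mathbf 0$ are the all-treated and all-control vectors. Estimators: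 for fixed researcher-chosen real weights $u_{ar}$ and $c_{ar}$, let $z^u_a=\sum_r T_r u_{ar}$, $\hat\beta^u_a=y_a\,(z^u_a-\mathbb E z^u_a)/\mathrm{Cov}(x_a,z^u_a)$, and $\widehat{\mathcal W_a(\mathbf 1)}^c=\sum_r\left[\frac{T_r w_{ar}(e_{ar}-c_{ar})}{p}+w_{ar}c_{ar}\right]$, where $p$ is the treatment probability.
   Formalization: The covariance $\mathrm{Cov}(x_a,z^u_a)$ in the denominator of $\hat\beta^u_a$ is assumed nonzero for every a ∈ 𝒜, as a hypothesis beyond (a)–(f). The statement above fails without it. *)

From HB Require Import structures.
From mathcomp Require Import all_boot all_order all_algebra.
Set Implicit Arguments. Unset Strict Implicit. Unset Printing Implicit Defensive.
Import Order.TTheory GRing.Theory Num.Theory.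
Local Open Scope ring_scope.

Section Defs.
Variables (K : realFieldType) (A Rr : finType).

Definition treat := {ffun Rr -> bool}.

Definition edge_fun := A -> Rr -> treat -> bool.

Definition all1 : treat := [ffun => true].
Definition all0 : treat := [ffun => false].

Definition r_driven (E : edge_fun) : Prop :=
  forall a r (t t' : treat), t r = t' r -> E a r t = E a r t'.

Definition anchor (E : edge_fun) (G : {set A * Rr}) : Prop :=
  forall a r (t : treat), (a, r) \in G -> E a r t = true.

Definition bern_prob (p : K) (t : treat) : K :=
  \prod_(r : Rr) (if t r then p else 1 - p).

Definition Ex (p : K) (f : treat -> K) : K :=
  \sum_(t : treat) bern_prob p t * f t.

Definition Cov (p : K) (f g : treat -> K) : K :=
  Ex p (fun t => f t * g t) - Ex p f * Ex p g.

Definition exposure (E : edge_fun) (w : A -> Rr -> K) (a : A) (t : treat) : K :=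
  \sum_(r : Rr) (t r)%:R * (E a r t)%:R * w a r.

Definition Y (E : edge_fun) (w : A -> Rr -> K) (alpha beta : A -> K)
  (a : A) (t : treat) : K :=
  alpha a + beta a * exposure E w a t.

Definition TTE (E : edge_fun) (w : A -> Rr -> K) (alpha beta : A -> K) : K :=
  (#|A|%:R)^-1 * \sum_(a : A) (Y E w alpha beta a all1 - Y E w alpha beta a all0).

Definition W1 (E : edge_fun) (w : A -> Rr -> K) (a : A) : K :=
  \sum_(r : Rr) w a r * (E a r all1)%:R.

Definition zu (u : A -> Rr -> K) (a : A) (t : treat) : K :=
  \sum_(r : Rr) (t r)%:R * u a r.

Definition beta_hat (p : K) (E : edge_fun) (w : A -> Rr -> K) (alpha beta : A -> K)
  (u : A -> Rr -> K) (a : A) (t : treat) : K :=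
  Y E w alpha beta a t * (zu u a t - Ex p (zu u a))
    / Cov p (exposure E w a) (zu u a).

Definition W1_hat (p : K) (E : edge_fun) (w : A -> Rr -> K) (c : A -> Rr -> K)
  (a : A) (t : treat) : K :=
  \sum_(r : Rr) ((t r)%:R * w a r * ((E a r t)%:R - c a r) / p + w a r * c a r).

Definition mu_hat (p : K) (E : edge_fun) (w : A -> Rr -> K) (alpha beta : A -> K)
  (u c : A -> Rr -> K) (t : treat) : K :=
  (#|A|%:R)^-1 * \sum_(a : A) beta_hat p E w alpha beta u a t * W1_hat p E w c a t.

End Defs.

From HB Require Import structures.
From mathcomp Require Import all_boot all_order all_algebra.
From mathcomp Require Import ring.
Import Order.TTheory GRing.Theory Num.Theory.
Set Implicit Arguments. Unset Strict Implicit. Unset Printing Implicit Defensive.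
Local Open Scope ring_scope.

(* Since edges are r-driven, T_r e_ar = T_r e_ar(1); hence the exposure x_a
   and the estimator W_a(1)-hat are affine functions of T, and W_a(1)-hat is
   a Horvitz-Thompson estimator of W_a(1).  The centred instrument
   z^u_a - E z^u_a = sum_s u_as (T_s - p) only charges anchored edges, and on
   an anchored edge (a, s) the term of W_a(1)-hat does not depend on T_s,
   because e_as = c_as = 1.  Independence of the T_r then gives
   E[(T_s - p) y_a W-hat] = beta_a p (1 - p) w_as e_as(1) E[W-hat]; summed
   against u_as this is beta_a Cov(x_a, z^u_a) E[W-hat], so that
   E[beta-hat_a W-hat_a] = beta_a W_a(1). *)

Section BernoulliDesign.
Variables (K : realFieldType) (Rr : finType) (p : K).
Implicit Types (f g h : treat Rr -> K) (k u : Rr -> K) (s : Rr).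

Lemma eq_Ex f g : f =1 g -> Ex p f = Ex p g.
Proof. by move=> fg; apply: eq_bigr => t _; rewrite fg. Qed.

Lemma ExD f g : Ex p (fun t => f t + g t) = Ex p f + Ex p g.
Proof. by rewrite /Ex -big_split; apply: eq_bigr => t _; rewrite mulrDr. Qed.

Lemma ExB f g : Ex p (fun t => f t - g t) = Ex p f - Ex p g.
Proof. by rewrite /Ex -sumrB; apply: eq_bigr => t _; rewrite mulrBr. Qed.

Lemma ExZ (a : K) f : Ex p (fun t => a * f t) = a * Ex p f.
Proof. by rewrite /Ex mulr_sumr; apply: eq_bigr => t _; rewrite mulrCA. Qed.

Lemma Ex_sum (I : finType) (F : I -> treat Rr -> K) :
  Ex p (fun t => \sum_(i : I) F i t) = \sum_(i : I) Ex p (F i).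
Proof. by rewrite /Ex exchange_big; apply: eq_bigr => t _; rewrite mulr_sumr. Qed.

Lemma Ex_const (a : K) : Ex p (fun _ : treat Rr => a) = a.
Proof.
rewrite /Ex -mulr_suml /bern_prob.
rewrite -(bigA_distr_bigA (fun (r : Rr) (b : bool) => if b then p else 1 - p)).
by rewrite big1 ?mul1r // => r _; rewrite big_bool /= subrKC.
Qed.

Lemma Cov_ext f f' g g' : f =1 f' -> g =1 g' -> Cov p f g = Cov p f' g'.
Proof.
move=> ff' gg'; rewrite /Cov (eq_Ex ff') (eq_Ex gg').
by congr (_ - _); apply: eq_Ex => t; rewrite ff' gg'.
Qed.

Lemma CovE f g : Cov p f g = Ex p (fun t => (g t - Ex p g) * f t).
Proof.
rewrite (eq_Ex (g := fun t => g t * f t - Ex p g * f t)) => [|t]; last by rewrite mulrBl.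
by rewrite ExB ExZ /Cov mulrC; congr (_ - _); apply: eq_Ex => t; rewrite mulrC.
Qed.

Definition set_coord (t : treat Rr) s (b : bool) : treat Rr :=
  [ffun r => if r == s then b else t r].

Definition ignores s h := forall t b, h (set_coord t s b) = h t.

Lemma set_coord_at t s b : set_coord t s b s = b.
Proof. by rewrite ffunE eqxx. Qed.

Lemma set_coord_other t s b r : r != s -> set_coord t s b r = t r.
Proof. by rewrite ffunE => /negbTE ->. Qed.

Lemma ignoresM s f g : ignores s f -> ignores s g -> ignores s (fun t => f t * g t).
Proof. by move=> fs gs t b; rewrite fs gs. Qed.

Lemma ignores_coord s r : r != s -> ignores s (fun t => (t r)%:R).
Proof. by move=> rs t b; rewrite set_coord_other. Qed.

(* Flipping coordinate s matches the terms with [t s = false] to those with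
   [t s = true]. *)
Lemma sum_coord_mul s (phi : bool -> K) h : ignores s h ->
  \sum_(t : treat Rr) phi (t s) * h t = (phi true + phi false) * \sum_(t : treat Rr | t s) h t.
Proof.
move=> hs; rewrite (bigID (fun t : treat Rr => t s)) /= mulrDl !mulr_sumr.
congr (_ + _); first by apply: eq_bigr => t ->.
pose flip t := set_coord t s (~~ t s).
have flipK : involutive flip.
  move=> t; apply/ffunP => r; have [->|rs] := eqVneq r s.
    by rewrite !set_coord_at negbK.
  by rewrite !set_coord_other.
rewrite (reindex_inj (inv_inj flipK)) /=.
apply: eq_big => t; first by rewrite set_coord_at negbK.
by rewrite set_coord_at negbK => ->; rewrite hs.
Qed.

Lemma Ex_coord_mul s (g : bool -> K) h : ignores s h ->
  Ex p (fun t => g (t s) * h t) = (p * g true + (1 - p) * g false) * Ex p h.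
Proof.
move=> hs; pose rho (b : bool) := if b then p else 1 - p.
pose F (t : treat Rr) := \prod_(r | r != s) rho (t r) * h t.
have bernE (t : treat Rr) : bern_prob p t = rho (t s) * \prod_(r | r != s) rho (t r).
  by rewrite /bern_prob (bigD1 s).
have Fs : ignores s F.
  move=> t b; rewrite /F hs; congr (_ * _).
  by apply: eq_bigr => r rs; rewrite set_coord_other.
have ExhE : Ex p h = \sum_(t : treat Rr | t s) F t.
  rewrite /Ex (eq_bigr (fun t : treat Rr => rho (t s) * F t)) => [|t _]; last first.
    by rewrite bernE /F mulrA.
  by rewrite (sum_coord_mul rho Fs) /rho subrKC mul1r.
rewrite ExhE /Ex (eq_bigr (fun t : treat Rr => (g (t s) * rho (t s)) * F t)) => [|t _].
  by rewrite (sum_coord_mul (fun b => g b * rho b) Fs) /rho; congr (_ * _); ring.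
by rewrite bernE /F; ring.
Qed.

Lemma Ex_centered_coord s h : ignores s h -> Ex p (fun t => ((t s)%:R - p) * h t) = 0.
Proof. by move=> hs; rewrite (Ex_coord_mul (fun b : bool => b%:R - p)) //=; ring. Qed.

Lemma Ex_centered_coord_sq s h : ignores s h ->
  Ex p (fun t => ((t s)%:R - p) * ((t s)%:R * h t)) = p * (1 - p) * Ex p h.
Proof.
move=> hs; rewrite (eq_Ex (g := fun t => (((t s)%:R - p) * (t s)%:R) * h t)).
  by rewrite (Ex_coord_mul (fun b : bool => (b%:R - p) * b%:R)) //=; congr (_ * _); ring.
by move=> t; rewrite mulrA.
Qed.

Definition lin_stat k (t : treat Rr) : K := \sum_r (t r)%:R * k r.

Lemma Ex_lin_stat k : Ex p (lin_stat k) = p * \sum_r k r.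
Proof.
rewrite Ex_sum mulr_sumr; apply: eq_bigr => r _.
by rewrite (Ex_coord_mul (fun b : bool => b%:R) (h := fun _ => k r)) // Ex_const /=; ring.
Qed.

Lemma lin_stat_centered k t :
  lin_stat k t - Ex p (lin_stat k) = \sum_s k s * ((t s)%:R - p).
Proof. by rewrite Ex_lin_stat mulr_sumr -sumrB; apply: eq_bigr => s _; ring. Qed.

Lemma Ex_centered_lin_stat k f :
  Ex p (fun t => (lin_stat k t - Ex p (lin_stat k)) * f t) =
  \sum_s k s * Ex p (fun t => ((t s)%:R - p) * f t).
Proof.
rewrite (eq_Ex (g := fun t => \sum_s k s * (((t s)%:R - p) * f t))) => [|t].
  by rewrite Ex_sum; apply: eq_bigr => s _; rewrite ExZ.
by rewrite lin_stat_centered mulr_suml; apply: eq_bigr => s _; rewrite mulrA.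
Qed.

Lemma Ex_centered_coord_lin_stat s k h : ignores s h ->
  Ex p (fun t => ((t s)%:R - p) * (lin_stat k t * h t)) = p * (1 - p) * k s * Ex p h.
Proof.
move=> hs.
rewrite (eq_Ex (g := fun t => \sum_r k r * (((t s)%:R - p) * ((t r)%:R * h t)))); last first.
  move=> t; rewrite /lin_stat mulr_suml mulr_sumr.
  by apply: eq_bigr => r _; ring.
rewrite Ex_sum (bigD1 s) //= big1 => [|r rs]; last first.
  by rewrite ExZ Ex_centered_coord ?mulr0 //; apply: ignoresM => //; apply: ignores_coord.
by rewrite ExZ Ex_centered_coord_sq // addr0; ring.
Qed.

Lemma Cov_lin_stat k u :
  Cov p (lin_stat k) (lin_stat u) = p * (1 - p) * \sum_s u s * k s.
Proof.
rewrite CovE (eq_Ex (g := fun t => (lin_stat u t - Ex p (lin_stat u)) * (lin_stat k t * 1))).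
  rewrite Ex_centered_lin_stat mulr_sumr; apply: eq_bigr => s _.
  by rewrite Ex_centered_coord_lin_stat // Ex_const; ring.
by move=> t; rewrite mulr1.
Qed.

(* The regression identity that makes beta-hat unbiased for the slope. *)
Lemma Ex_centered_lin_stat_affine u k (a b : K) h :
  (forall s, u s != 0 -> ignores s h) ->
  Ex p (fun t => (lin_stat u t - Ex p (lin_stat u)) * ((a + b * lin_stat k t) * h t)) =
  b * Cov p (lin_stat k) (lin_stat u) * Ex p h.
Proof.
move=> uh; rewrite Ex_centered_lin_stat Cov_lin_stat mulr_sumr mulr_sumr mulr_suml.
apply: eq_bigr => s _; have [->|/uh hs] := eqVneq (u s) 0; first by rewrite !(mul0r, mulr0).
rewrite (eq_Ex (g := fun t => a * (((t s)%:R - p) * h t) +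
                              b * (((t s)%:R - p) * (lin_stat k t * h t)))); last first.
  by move=> t; ring.
by rewrite ExD !ExZ Ex_centered_coord // Ex_centered_coord_lin_stat //; ring.
Qed.

End BernoulliDesign.

Section EdgeModel.
Variables (K : realFieldType) (A Rr : finType) (E : edge_fun A Rr).
Variables (w : A -> Rr -> K) (p : K).
Hypothesis rd : r_driven E.

Lemma edge_treated a r (t : treat Rr) : t r -> E a r t = E a r (all1 Rr).
Proof. by move=> tr; apply: rd; rewrite ffunE. Qed.

Lemma exposure_lin_stat a t :
  exposure E w a t = lin_stat (fun r => (E a r (all1 Rr))%:R * w a r) t.
Proof.
apply: eq_bigr => r _; case tr: (t r); last by rewrite !mul0r.
by rewrite edge_treated // mulrA.
Qed.

Lemma W1_hat_lin_stat (c : A -> Rr -> K) a t :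
  W1_hat p E w c a t =
  lin_stat (fun r => w a r * ((E a r (all1 Rr))%:R - c a r) / p) t + \sum_r w a r * c a r.
Proof.
rewrite /W1_hat big_split; congr (_ + _); apply: eq_bigr => r _.
case tr: (t r); last by rewrite !mul0r.
by rewrite edge_treated //; ring.
Qed.

Lemma Ex_W1_hat (c : A -> Rr -> K) a : p != 0 -> Ex p (W1_hat p E w c a) = W1 E w a.
Proof.
move=> p0; rewrite (eq_Ex p (W1_hat_lin_stat c a)) ExD Ex_lin_stat Ex_const.
rewrite mulr_sumr -big_split; apply: eq_bigr => r _.
by rewrite mulrC mulfVK //= -mulrDr subrK.
Qed.

Lemma W1_hat_ignores_anchored (G : {set A * Rr}) (c : A -> Rr -> K) a s :
  anchor E G -> (forall a r, c a r = ((a, r) \in G)%:R) -> (a, s) \in G ->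
  ignores s (W1_hat p E w c a).
Proof.
move=> anc cG asG t b; rewrite !W1_hat_lin_stat; congr (_ + _).
apply: eq_bigr => r _; have [->|rs] := eqVneq r s; last by rewrite set_coord_other.
by rewrite (anc _ _ _ asG) cG asG subrr mulr0 mul0r !mulr0.
Qed.

Lemma Y_all1_sub_all0 (alpha beta : A -> K) a :
  Y E w alpha beta a (all1 Rr) - Y E w alpha beta a (all0 Rr) = beta a * W1 E w a.
Proof.
have x0 : exposure E w a (all0 Rr) = 0.
  by rewrite /exposure big1 // => r _; rewrite ffunE !mul0r.
have x1 : exposure E w a (all1 Rr) = W1 E w a.
  by apply: eq_bigr => r _; rewrite ffunE mul1r mulrC.
by rewrite /Y x0 x1 mulr0 addr0 addrAC subrr add0r.
Qed.

End EdgeModel.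

Lemma Ex_beta_hat_W1_hat (K : realFieldType) (A Rr : finType)
  (E : edge_fun A Rr) (w : A -> Rr -> K) (alpha beta : A -> K)
  (u c : A -> Rr -> K) (G : {set A * Rr}) (p : K) a :
  anchor E G -> r_driven E -> p != 0 ->
  (forall a r, u a r != 0 -> (a, r) \in G) ->
  (forall a r, c a r = ((a, r) \in G)%:R) ->
  Cov p (exposure E w a) (zu u a) != 0 ->
  Ex p (fun t => beta_hat p E w alpha beta u a t * W1_hat p E w c a t) = beta a * W1 E w a.
Proof.
move=> anc rd p0 uG cG.
pose k r := (E a r (all1 Rr))%:R * w a r.
have CE : Cov p (exposure E w a) (zu u a) = Cov p (lin_stat k) (lin_stat (u a)).
  by apply: Cov_ext => // t; apply: exposure_lin_stat.
rewrite CE => C0.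
rewrite (eq_Ex p (g := fun t => (Cov p (lin_stat k) (lin_stat (u a)))^-1 *
  ((zu u a t - Ex p (zu u a)) * ((alpha a + beta a * lin_stat k t) * W1_hat p E w c a t)))).
  rewrite ExZ Ex_centered_lin_stat_affine => [|s /uG]; last exact: W1_hat_ignores_anchored.
  by rewrite Ex_W1_hat // [beta a * _]mulrC -mulrA mulKf.
by move=> t; rewrite /beta_hat CE /Y (exposure_lin_stat w rd) -/k; ring.
Qed.

Theorem theorem1 (K : realFieldType) (A Rr : finType)
  (E : edge_fun A Rr) (w : A -> Rr -> K) (alpha beta : A -> K)
  (u c : A -> Rr -> K) (G : {set A * Rr}) (p : K) :
  anchor E G ->
  (* (a) *) r_driven E ->
  (* (b) *) 0 < p < 1 ->
  (* (c) *) (forall a r, u a r != 0 -> (a, r) \in G) ->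
  (* (d) *) (forall a r, c a r = ((a, r) \in G)%:R) ->
  (* (e) *) (forall a r, (a, r) \in G -> w a r != 0) ->
  (* (f) *) (forall a, (0 < #|[set r | u a r != 0%R]|)%N) ->
  (* well-definedness of beta-hat (nonzero denominator) *)
  (forall a, Cov p (exposure E w a) (zu u a) != 0) ->
  Ex p (mu_hat p E w alpha beta u c) = TTE E w alpha beta.
Proof.
move=> anc rd /andP[p_gt0 _] uG cG _ _ C0.
rewrite /mu_hat ExZ Ex_sum /TTE; congr (_ * _); apply: eq_bigr => a _.
by rewrite Y_all1_sub_all0 (Ex_beta_hat_W1_hat _ _ anc rd (lt0r_neq0 p_gt0) uG cG (C0 a)).
Qed.
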